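(* Let $(\Omega,T)$ be a minimal subshift over a finite alphabet $A$ such that no word in $L_5(\Omega)$ has repeated letters, and suppose the language $L(\Omega)$ is recursive. Then: (1) there is an algorithm which, given $w,v\in L(\Omega)$ and $i,j\in\mathbb Z$, decides whether $(v,j)\subseteq(w,i)$; (2) there is an algorithm which, given $w,v\in L(\Omega)$ and $i,j\in\mathbb Z$, decides whether $(w,i)$ and $(v,j)$ are $3$-disjoint; (3) for every $w\in L(\Omega)$ and $i\in\mathbb Z$, the set of cylinder partitions of $(w,i)$ is a recursive subset of $\mathcal{FS}(A^*\times\mathbb Z)$, the set of all finite subsets of $A^*\times\mathbb Z$.
   Context: $T$ is the left shift $(T\omega)_m=\omega_{m+1}$ on $A^{\mathbb Z}$; a minimal subshift is a closed shift-invariant $\Omega\subseteq A^{\mathbb Z}$ with every orbit dense. $A^*$ is the set of nonempty finite words over $A$, indexed from $0$: $w=w_0\cdots w_{|w|-1}$. $L_m(\Omega)$ is the set of words of length $m$ occurring in sequences of $\Omega$ and $L(\Omega)=\bigcup_m L_m(\Omega)$; it is recursive if membership is algorithmically decidable. For a word $v$ and $i\in\mathbb Z$, $(v,i)=\{\omega\in\Omega:\omega_{k-i}=v_k,\ 0\leq k\leq|v|-1\}$. A finite set $S\subseteq A^*\times\mathbb Z$ is a cylinder partition of $(w,i)$ if the sets $(s,k)$, $(s,k)\in S$, are cylinder sets (with $s\in L(\Omega)$) that are pairwise disjoint and have union $(w,i)$. Two clopen sets $U,V$ are $3$-disjoint if $(U\cup TU\cup T^2U)\cap(V\cup TV\cup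 T^2V)=\emptyset$. *)

From mathcomp Require Import all_boot all_order all_algebra.
Set Implicit Arguments. Unset Strict Implicit. Unset Printing Implicit Defensive.
Import Order.TTheory GRing.Theory Num.Theory.
Local Open Scope ring_scope.

(* Model of computation: Kleene mu-recursive functions nat -> nat,    *)
(* unary, with a bijective pairing nat * nat <-> nat.                  *)

(* bijection nat*nat -> nat : (a,b) |-> 2^a (2b+1) - 1 *)
Definition npair (a b : nat) : nat := (2 ^ a * (b.*2).+1).-1.
Definition nfst (z : nat) : nat := logn 2 z.+1.
Definition nsnd (z : nat) : nat := ((z.+1 %/ 2 ^ nfst z)./2)%N.

Inductive rf : Type :=
| rZero : rf
| rSucc : rf
| rId : rf
| rFst : rf
| rSnd : rf
| rComp : rf -> rf -> rf     (* rComp f g : x |-> f (g x) *)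
| rPair : rf -> rf -> rf
| rPrec : rf -> rf -> rf     (* primitive recursion on the second component *)
| rMin : rf -> rf.           (* rMin f : x |-> least n with f (npair x n) = 0 *)

Inductive eval : rf -> nat -> nat -> Prop :=
| ev_zero x : eval rZero x 0
| ev_succ x : eval rSucc x x.+1
| ev_id x : eval rId x x
| ev_fst x : eval rFst x (nfst x)
| ev_snd x : eval rSnd x (nsnd x)
| ev_comp f g x y z : eval g x y -> eval f y z -> eval (rComp f g) x z
| ev_pair f g x a b : eval f x a -> eval g x b -> eval (rPair f g) x (npair a b)
| ev_prec0 f g a y : eval f a y -> eval (rPrec f g) (npair a 0) y
| ev_precS f g a n y y' :
    eval (rPrec f g) (npair a n) y ->
    eval g (npair a (npair n y)) y' ->
    eval (rPrec f g) (npair a n.+1) y'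
| ev_min f x n :
    eval f (npair x n) 0 ->
    (forall m, (m < n)%N -> exists k, eval f (npair x m) k.+1) ->
    eval (rMin f) x n.

Definition decides_at (c : rf) (x : nat) (P : Prop) : Prop :=
  (P -> eval c x 1) /\ (~ P -> eval c x 0).

Definition code_int (z : int) : nat :=
  match z with Posz n => n.*2 | Negz n => (n.*2).+1 end.

Fixpoint code_word (A : finType) (w : seq A) : nat :=
  match w with
  | [::] => 0
  | a :: w' => (npair (nat_of_ord (enum_rank a)) (code_word w')).+1
  end.

Definition code_wi (A : finType) (p : seq A * int) : nat :=
  npair (code_word p.1) (code_int p.2).

(* finite subsets of A^* x Z are presented by lists enumerating them *)
Fixpoint code_list (A : finType) (l : seq (seq A * int)) : nat :=
  match l with
  | [::] => 0
  | p :: l' => (npair (code_wi p) (code_list l')).+1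
  end.

Definition code_wivj (A : finType) (w : seq A) (i : int) (v : seq A) (j : int) : nat :=
  npair (code_word w) (npair (code_int i) (npair (code_word v) (code_int j))).

(* T^n : (T^n om)_m = om_(m+n); T is the left shift (T om)_m = om_(m+1) *)
Definition shiftn (A : Type) (n : int) (om : int -> A) : int -> A :=
  fun m => om (m + n).

(* closedness in the product topology of the discrete space A *)
Definition sclosed (A : finType) (Om : (int -> A) -> Prop) : Prop :=
  forall om : int -> A,
    (forall N : nat, exists eta, Om eta /\
        forall m : int, `|m| <= N%:Z -> eta m = om m) ->
    Om om.

Definition shift_invariant (A : finType) (Om : (int -> A) -> Prop) : Prop :=
  forall om : int -> A, Om (shiftn 1 om) <-> Om om.

(* every orbit {T^k om : k in Z} is dense in Om *)
Definition orbits_dense (A : finType) (Om : (int -> A) -> Prop) : Prop :=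
  forall om eta : int -> A, Om om -> Om eta ->
    forall N : nat, exists k : int,
      forall m : int, `|m| <= N%:Z -> shiftn k om m = eta m.

Definition minimal_subshift (A : finType) (Om : (int -> A) -> Prop) : Prop :=
  (exists om, Om om) /\ sclosed Om /\ shift_invariant Om /\ orbits_dense Om.

Definition occurs_at (A : finType) (w : seq A) (om : int -> A) (p : int) : Prop :=
  [seq om (p + k%:Z) | k <- iota 0 (size w)] = w.

Definition inLm (A : finType) (Om : (int -> A) -> Prop) (m : nat) (w : seq A) : Prop :=
  size w = m /\ exists om, Om om /\ exists p : int, occurs_at w om p.

(* L(Om): words of A^* (nonempty words) occurring in Om *)
Definition inL (A : finType) (Om : (int -> A) -> Prop) (w : seq A) : Prop :=
  exists m : nat, (0 < m)%N /\ inLm Om m w.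

(* the cylinder (v,i) = {om in Om : om_(k-i) = v_k, 0 <= k <= |v|-1} *)
Definition cyl (A : finType) (Om : (int -> A) -> Prop) (v : seq A) (i : int)
  : (int -> A) -> Prop :=
  fun om => Om om /\ occurs_at v om (- i).

Definition subsetP' (A : Type) (U V : A -> Prop) : Prop := forall x, U x -> V x.

Definition Timg (A : Type) (n : int) (U : (int -> A) -> Prop) : (int -> A) -> Prop :=
  fun om => exists u, U u /\ om = shiftn n u.

Definition T3 (A : Type) (U : (int -> A) -> Prop) : (int -> A) -> Prop :=
  fun om => U om \/ Timg 1 U om \/ Timg 2 U om.

Definition three_disjoint (A : Type) (U V : (int -> A) -> Prop) : Prop :=
  forall om, ~ (T3 U om /\ T3 V om).

Definition cylinder_partition (A : finType) (Om : (int -> A) -> Prop)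
    (w : seq A) (i : int) (l : seq (seq A * int)) : Prop :=
  (forall sk, sk \in l -> inL Om sk.1) /\
  (forall sk tk, sk \in l -> tk \in l -> sk != tk ->
      forall om, ~ (cyl Om sk.1 sk.2 om /\ cyl Om tk.1 tk.2 om)) /\
  (forall om, cyl Om w i om <-> exists2 sk, sk \in l & cyl Om sk.1 sk.2 om).

Definition recursive_language (A : finType) (Om : (int -> A) -> Prop) : Prop :=
  exists c : rf, forall w : seq A, decides_at c (code_word w) (inL Om w).

From mathcomp Require Import all_boot all_order all_algebra zify.
Import Order.TTheory GRing.Theory Num.Theory.
From Stdlib Require Import ClassicalEpsilon FunctionalExtensionality.
Set Implicit Arguments. Unset Strict Implicit.

(* If |k| + |s| <= M, whether a point lies in the cylinder (s,k) depends only on its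
   window on [-M, M), and by shift invariance the words read in such windows are exactly
   the words of length 2M in L(Om).  Inclusion, 3-disjointness and the partition property
   of cylinders therefore become bounded quantifications over the finitely many words of
   a length computable from the input, tested with the decider of L(Om); what remains is
   to check that these tests are mu-recursive in the codes of their inputs. *)

(** * Pairing and mu-recursive functions *)

Lemma npairS a b : (npair a b).+1 = 2 ^ a * (b.*2).+1.
Proof. by rewrite /npair prednK // muln_gt0 expn_gt0. Qed.

Lemma nfst_npair a b : nfst (npair a b) = a.
Proof.
rewrite /nfst npairS mulnC logn_Gauss ?pfactorK //.
by rewrite coprime2n /= odd_double.
Qed.

Lemma nsnd_npair a b : nsnd (npair a b) = b.
Proof. by rewrite /nsnd nfst_npair npairS mulKn ?expn_gt0 //= uphalf_double. Qed.

Lemma npair_nfst_nsnd z : npair (nfst z) (nsnd z) = z.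
Proof.
rewrite /nsnd /nfst.
have [m coprime_m Ez] := @pfactor_coprime 2 z.+1 isT isT.
set e := logn 2 z.+1 in Ez *.
have -> : z.+1 %/ 2 ^ e = m by rewrite Ez mulnK ?expn_gt0.
have odd_m : odd m by rewrite -coprime2n.
have Em : (m./2).*2.+1 = m by rewrite -[RHS]odd_double_half odd_m add1n.
by rewrite /npair Em mulnC -Ez.
Qed.

Lemma leq_add_npair a b : a + b <= npair a b.
Proof.
rewrite -ltnS npairS.
have : a.+1 * (b.*2).+1 <= 2 ^ a * (b.*2).+1 by rewrite leq_mul2r ltn_expl.
rewrite -!muln2; nia.
Qed.

Lemma npair_inj a b c d : npair a b = npair c d -> a = c /\ b = d.
Proof.
move=> E; split; first by rewrite -(nfst_npair a b) E nfst_npair.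
by rewrite -(nsnd_npair a b) E nsnd_npair.
Qed.

Definition computable (f : nat -> nat) := exists c, forall x, eval c x (f x).

Lemma eq_computable f g : f =1 g -> computable f -> computable g.
Proof. by move=> E [c Hc]; exists c => x; rewrite -E. Qed.

Lemma computable_const k : computable (fun _ => k).
Proof.
elim: k => [|k [c Hc]]; first by exists rZero => x; constructor.
by exists (rComp rSucc c) => x; econstructor; [exact: Hc | constructor].
Qed.

Lemma computable_id : computable id.
Proof. by exists rId => x; constructor. Qed.

Lemma computable_comp f g : computable f -> computable g -> computable (fun x => f (g x)).
Proof. by move=> [cf Hf] [cg Hg]; exists (rComp cf cg) => x; econstructor; eauto. Qed.

Lemma computable_nfst f : computable f -> computable (fun x => nfst (f x)).
Proof. by apply: computable_comp; exists rFst => x; constructor. Qed.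

Lemma computable_nsnd f : computable f -> computable (fun x => nsnd (f x)).
Proof. by apply: computable_comp; exists rSnd => x; constructor. Qed.

Lemma computable_succ f : computable f -> computable (fun x => (f x).+1).
Proof. by apply: computable_comp; exists rSucc => x; constructor. Qed.

Lemma computable_npair f g :
  computable f -> computable g -> computable (fun x => npair (f x) (g x)).
Proof. by move=> [cf Hf] [cg Hg]; exists (rPair cf cg) => x; constructor. Qed.

Lemma computable_uncurry (h : nat -> nat -> nat) f g :
  computable (fun z => h (nfst z) (nsnd z)) -> computable f -> computable g ->
  computable (fun x => h (f x) (g x)).
Proof.
move=> Hh Hf Hg; apply: eq_computable (computable_comp Hh (computable_npair Hf Hg)).
by move=> x; rewrite nfst_npair nsnd_npair.
Qed.

Lemma computable_iter (F : nat -> nat -> nat) N I :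
  computable (fun z => F (nfst z) (nsnd z)) -> computable N -> computable I ->
  computable (fun x => iter (N x) (F x) (I x)).
Proof.
move=> [cF HF] [cN HN] [cI HI].
pose step := rComp cF (rPair rFst (rComp rSnd rSnd)).
have Hstep a n y : eval step (npair a (npair n y)) (F a y).
  have Hfst u v : nfst u = v -> eval rFst u v by move=> <-; constructor.
  have Hsnd u v : nsnd u = v -> eval rSnd u v by move=> <-; constructor.
  apply: (ev_comp (y := npair a y)); last by have := HF (npair a y); rewrite nfst_npair nsnd_npair.
  constructor; first by apply: Hfst; rewrite nfst_npair.
  by apply: (ev_comp (y := npair n y)); apply: Hsnd; rewrite nsnd_npair.
have Hrec a n : eval (rPrec cI step) (npair a n) (iter n (F a) (I a)).
  by elim: n => [|n IH]; [constructor | econstructor; [exact: IH | exact: Hstep]].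
exists (rComp (rPrec cI step) (rPair rId cN)) => x.
by econstructor; [constructor; [constructor | exact: HN] | exact: Hrec].
Qed.

Lemma computable_add f g : computable f -> computable g -> computable (fun x => f x + g x).
Proof.
apply: (computable_uncurry (h := addn)).
have := computable_iter (F := fun _ s => s.+1) (computable_succ (computable_nsnd computable_id))
  (computable_nsnd computable_id) (computable_nfst computable_id).
by apply: eq_computable => x; rewrite iter_succn.
Qed.

Lemma computable_pred f : computable f -> computable (fun x => (f x).-1).
Proof.
apply: computable_comp.
pose step s := npair (nsnd s) (nsnd s).+1.
have Hstep : computable (fun z => step (nsnd z)).
  exact: computable_npair (computable_nsnd (computable_nsnd computable_id))
                          (computable_succ (computable_nsnd (computable_nsnd computable_id))).
have := computable_nfst
  (computable_iter (F := fun _ => step) Hstep computable_id (computable_const (npair 0 0))).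
apply: eq_computable => x /=.
suff -> : iter x step (npair 0 0) = npair x.-1 x by rewrite nfst_npair.
by elim: x => [//|x IH]; rewrite iterS IH /step nsnd_npair.
Qed.

Lemma computable_sub f g : computable f -> computable g -> computable (fun x => f x - g x).
Proof.
apply: (computable_uncurry (h := subn)).
have := computable_iter (F := fun _ s => s.-1) (computable_pred (computable_nsnd computable_id))
  (computable_nsnd computable_id) (computable_nfst computable_id).
apply: eq_computable => x; elim: (nsnd x) => [|n IH]; first by rewrite subn0.
by rewrite iterS IH subnS.
Qed.

Lemma computable_mul f g : computable f -> computable g -> computable (fun x => f x * g x).
Proof.
apply: (computable_uncurry (h := muln)).
have := computable_iter (F := fun a s => s + nfst a)
  (computable_add (computable_nsnd computable_id) (computable_nfst (computable_nfst computable_id)))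
  (computable_nsnd computable_id) (computable_const 0).
apply: eq_computable => x; elim: (nsnd x) => [|n IH]; first by rewrite muln0.
by rewrite iterS IH mulnS addnC.
Qed.

Lemma computable_odd f : computable f -> computable (fun x => nat_of_bool (odd (f x))).
Proof.
apply: (computable_comp (f := fun y => nat_of_bool (odd y))).
have := computable_iter (F := fun _ s => 1 - s) (N := id) (I := fun _ => 0)
  (computable_sub (computable_const 1) (computable_nsnd computable_id)) computable_id
  (computable_const 0).
apply: eq_computable => x /=; elim: x => [//|x IH]; rewrite iterS IH /=.
by case: (odd x).
Qed.

Lemma computable_half f : computable f -> computable (fun x => (f x)./2).
Proof.
apply: (computable_comp (f := half)).
pose step s := npair (nfst s + nsnd s) (1 - nsnd s).
have Hstep : computable (fun z => step (nsnd z)).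
  exact: computable_npair
    (computable_add (computable_nfst (computable_nsnd computable_id))
                    (computable_nsnd (computable_nsnd computable_id)))
    (computable_sub (computable_const 1) (computable_nsnd (computable_nsnd computable_id))).
have := computable_nfst
  (computable_iter (F := fun _ => step) Hstep computable_id (computable_const (npair 0 0))).
apply: eq_computable => x /=.
suff -> : iter x step (npair 0 0) = npair x./2 (odd x) by rewrite nfst_npair.
elim: x => [//|x IH]; rewrite iterS IH /step nfst_npair nsnd_npair /=.
by rewrite uphalf_half addnC; case: (odd x).
Qed.

Lemma computable_eqn f g :
  computable f -> computable g -> computable (fun x => nat_of_bool (f x == g x)).
Proof.
move=> Hf Hg.
have := computable_sub (computable_const 1)
  (computable_add (computable_sub Hf Hg) (computable_sub Hg Hf)).
apply: eq_computable => x; case: eqP => [->|ne]; first by rewrite subnn.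
apply/eqP; rewrite subn_eq0; lia.
Qed.

Lemma computable_leq f g :
  computable f -> computable g -> computable (fun x => nat_of_bool (f x <= g x)).
Proof.
move=> Hf Hg; have := computable_eqn (computable_sub Hf Hg) (computable_const 0).
by apply: eq_computable => x; rewrite subn_eq0.
Qed.

Lemma computable_negb b :
  computable (fun x => nat_of_bool (b x)) -> computable (fun x => nat_of_bool (~~ b x)).
Proof.
move=> Hb; have := computable_sub (computable_const 1) Hb.
by apply: eq_computable => x; case: (b x).
Qed.

Lemma computable_andb b c :
  computable (fun x => nat_of_bool (b x)) -> computable (fun x => nat_of_bool (c x)) ->
  computable (fun x => nat_of_bool (b x && c x)).
Proof.
move=> Hb Hc; have := computable_mul Hb Hc.
by apply: eq_computable => x; case: (b x); case: (c x).
Qed.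

Lemma computable_orb b c :
  computable (fun x => nat_of_bool (b x)) -> computable (fun x => nat_of_bool (c x)) ->
  computable (fun x => nat_of_bool (b x || c x)).
Proof.
move=> Hb Hc; have := computable_negb (computable_andb (computable_negb Hb) (computable_negb Hc)).
by apply: eq_computable => x; case: (b x); case: (c x).
Qed.

Lemma computable_implb b c :
  computable (fun x => nat_of_bool (b x)) -> computable (fun x => nat_of_bool (c x)) ->
  computable (fun x => nat_of_bool (b x ==> c x)).
Proof.
move=> Hb Hc; have := computable_orb (computable_negb Hb) Hc.
by apply: eq_computable => x; case: (b x); case: (c x).
Qed.

Lemma computable_ifb b f g :
  computable (fun x => nat_of_bool (b x)) -> computable f -> computable g ->
  computable (fun x => if b x then f x else g x).
Proof.
move=> Hb Hf Hg.
have := computable_add (computable_mul Hb Hf) (computable_mul (computable_negb Hb) Hg).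
by apply: eq_computable => x; case: (b x); rewrite /= ?mul1n ?mul0n ?addn0.
Qed.

Lemma computable_count (N : nat -> nat) (P : nat -> nat -> bool) :
  computable N -> computable (fun z => nat_of_bool (P (nfst z) (nsnd z))) ->
  computable (fun x => count (P x) (iota 0 (N x))).
Proof.
move=> HN HP.
pose step x s := npair (nfst s).+1 (nsnd s + P x (nfst s)).
have Hstep : computable (fun z => step (nfst z) (nsnd z)).
  apply: computable_npair.
    exact: computable_succ (computable_nfst (computable_nsnd computable_id)).
  apply: computable_add (computable_nsnd (computable_nsnd computable_id)) _.
  exact: (computable_uncurry (h := fun a b => nat_of_bool (P a b))) HP
    (computable_nfst computable_id) (computable_nfst (computable_nsnd computable_id)).
have := computable_nsnd (computable_iter Hstep HN (computable_const (npair 0 0))).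
apply: eq_computable => x /=.
suff -> : forall n, iter n (step x) (npair 0 0) = npair n (count (P x) (iota 0 n)).
  by rewrite nsnd_npair.
elim=> [//|n IH]; rewrite iterS IH /step nfst_npair nsnd_npair.
by rewrite -addn1 iotaD count_cat /= addn0.
Qed.

Lemma computable_all (N : nat -> nat) (P : nat -> nat -> bool) :
  computable N -> computable (fun z => nat_of_bool (P (nfst z) (nsnd z))) ->
  computable (fun x => nat_of_bool (all (P x) (iota 0 (N x)))).
Proof.
move=> HN HP; have := computable_eqn (computable_count HN HP) HN.
by apply: eq_computable => x; rewrite all_count size_iota.
Qed.

Lemma computable_has (N : nat -> nat) (P : nat -> nat -> bool) :
  computable N -> computable (fun z => nat_of_bool (P (nfst z) (nsnd z))) ->
  computable (fun x => nat_of_bool (has (P x) (iota 0 (N x)))).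
Proof.
move=> HN HP.
have := computable_negb (computable_eqn (computable_count HN HP) (computable_const 0)).
by apply: eq_computable => x; rewrite has_count lt0n.
Qed.

Create HintDb computable discriminated.

#[local] Hint Extern 1 (computable _) => cbv beta; lazymatch goal with
  | |- computable (fun _ => ?k) => apply: (computable_const k)
  | |- computable (fun z => z) => apply: computable_id
  | |- computable nfst => exact: computable_nfst computable_id
  | |- computable nsnd => exact: computable_nsnd computable_id
  | |- computable (fun z => nat_of_bool (@?a z && @?b z)) => apply: (@computable_andb a b)
  | |- computable (fun z => nat_of_bool (@?a z || @?b z)) => apply: (@computable_orb a b)
  | |- computable (fun z => nat_of_bool (@?a z ==> @?b z)) => apply: (@computable_implb a b)
  | |- computable (fun z => nat_of_bool (~~ @?a z)) => apply: (@computable_negb a)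
  | |- computable (fun z => nat_of_bool (@?a z == @?b z)) => apply: (@computable_eqn a b)
  | |- computable (fun z => nat_of_bool (@?a z <= @?b z)) => apply: (@computable_leq a b)
  | |- computable (fun z => nat_of_bool (odd (@?a z))) => apply: (@computable_odd a)
  | |- computable (fun z => nat_of_bool (all (@?P z) (iota 0 (@?N z)))) =>
      apply: (@computable_all N P)
  | |- computable (fun z => nat_of_bool (has (@?P z) (iota 0 (@?N z)))) =>
      apply: (@computable_has N P)
  | |- computable (fun z => count (@?P z) (iota 0 (@?N z))) => apply: (@computable_count N P)
  | |- computable (fun z => match @?b z with true => @?f z | false => @?g z end) =>
      apply: (@computable_ifb b f g)
  | |- computable (fun z => iter (@?N z) (@?F z) (@?I z)) => apply: (@computable_iter F N I)
  | |- computable (fun z => nfst (@?a z)) => apply: (@computable_nfst a)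
  | |- computable (fun z => nsnd (@?a z)) => apply: (@computable_nsnd a)
  | |- computable (fun z => (@?a z).+1) => apply: (@computable_succ a)
  | |- computable (fun z => @?a z + @?b z) => apply: (@computable_add a b)
  | |- computable (fun z => @?a z - @?b z) => apply: (@computable_sub a b)
  | |- computable (fun z => @?a z * @?b z) => apply: (@computable_mul a b)
  | |- computable (fun z => (@?a z).-1) => apply: (@computable_pred a)
  | |- computable (fun z => (@?a z)./2) => apply: (@computable_half a)
  | |- computable (fun z => npair (@?a z) (@?b z)) => apply: (@computable_npair a b)
  end : computable.

#[local] Hint Extern 9 (computable _) =>
  match goal with H : computable ?f |- _ => apply: (computable_comp H) end : computable.

Ltac computable_auto := typeclasses eauto with computable.

(** * Codes of sequences *)

Fixpoint code_seq (T : Type) (f : T -> nat) (s : seq T) : nat :=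
  if s is x :: s' then (npair (f x) (code_seq f s')).+1 else 0.

Lemma code_wordE (A : finType) (w : seq A) :
  code_word w = code_seq (fun a => nat_of_ord (enum_rank a)) w.
Proof. by elim: w => //= a w ->. Qed.

Lemma code_listE (A : finType) (l : seq (seq A * int)) : code_list l = code_seq (@code_wi A) l.
Proof. by elim: l => //= p l ->. Qed.

Definition ctail y := nsnd y.-1.
Definition chead y := nfst y.-1.
Definition cdrop k y := iter k ctail y.
Definition cnth k y := chead (cdrop k y).
(* A code bounds the length of the sequence it encodes, so searching below [y] suffices. *)
Definition csize y := count (fun k => cdrop k y != 0) (iota 0 y).
Definition cseq y := [seq cnth k y | k <- iota 0 (csize y)].

Lemma count_ltn_iota m n : m <= n -> count (fun k => k < m) (iota 0 n) = m.
Proof.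
move=> le_mn; rewrite -(subnKC le_mn) iotaD count_cat add0n.
rewrite (@eq_in_count _ _ predT) ?count_predT ?size_iota; last by move=> k; rewrite mem_iota.
rewrite (@eq_in_count _ _ pred0) ?count_pred0 ?addn0 // => k.
by rewrite mem_iota => /andP [le_mk _]; rewrite ltnNge le_mk.
Qed.

Section CodeSeq.

Variables (T : eqType) (f : T -> nat).

Lemma ctail_cons x s : ctail (code_seq f (x :: s)) = code_seq f s.
Proof. by rewrite /ctail /= nsnd_npair. Qed.

Lemma chead_cons x s : chead (code_seq f (x :: s)) = f x.
Proof. by rewrite /chead /= nfst_npair. Qed.

Lemma cdrop_code_seq k s : cdrop k (code_seq f s) = code_seq f (drop k s).
Proof.
elim: s k => [|x s IH] [|k] //; first by elim: k => //= k ->.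
by rewrite /cdrop iterSr ctail_cons -/(cdrop k _) IH.
Qed.

Lemma cnth_code_seq_cons k x s : cnth k.+1 (code_seq f (x :: s)) = cnth k (code_seq f s).
Proof. by rewrite /cnth /cdrop iterSr ctail_cons. Qed.

Lemma leq_code_seq x s : x \in s -> f x < code_seq f s.
Proof.
elim: s => //= y s IH; rewrite in_cons ltnS => /predU1P [->|/IH lt_xs].
  exact: leq_trans (leq_addr _ _) (leq_add_npair _ _).
by apply: leq_trans (ltnW lt_xs) _; apply: leq_trans (leq_addl _ _) (leq_add_npair _ _).
Qed.

Lemma size_le_code_seq s : size s <= code_seq f s.
Proof.
elim: s => //= x s IH; rewrite ltnS.
by apply: leq_trans IH _; apply: leq_trans (leq_addl _ _) (leq_add_npair _ _).
Qed.

Lemma csize_code_seq s : csize (code_seq f s) = size s.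
Proof.
rewrite /csize -[RHS](count_ltn_iota (size_le_code_seq s)).
apply: eq_count => k; rewrite cdrop_code_seq.
by case E: (drop k s) => [|x s']; move: (congr1 size E); rewrite size_drop /=; lia.
Qed.

Lemma cseq_code_seq s : cseq (code_seq f s) = map f s.
Proof.
elim: s => // x s IH; rewrite /cseq csize_code_seq /= -[1]addn0 iotaDl -map_comp.
rewrite [cnth 0 _]chead_cons; congr (_ :: _); rewrite -IH /cseq csize_code_seq.
by apply: eq_map => k /=; rewrite cnth_code_seq_cons.
Qed.

Lemma code_seq_inj : injective f -> injective (code_seq f).
Proof.
move=> f_inj; elim=> [|x s IH] [|y t] //= [] /npair_inj [/f_inj -> /IH ->] //.
Qed.

End CodeSeq.

Lemma computable_ctail f : computable f -> computable (fun x => ctail (f x)).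
Proof. by move=> Hf; rewrite /ctail; computable_auto. Qed.

Lemma computable_chead f : computable f -> computable (fun x => chead (f x)).
Proof. by move=> Hf; rewrite /chead; computable_auto. Qed.

#[local] Hint Extern 1 (computable _) => cbv beta; lazymatch goal with
  | |- computable (fun z => ctail (@?a z)) => apply: (@computable_ctail a)
  | |- computable (fun z => chead (@?a z)) => apply: (@computable_chead a)
  end : computable.

Lemma computable_cdrop f g :
  computable f -> computable g -> computable (fun x => cdrop (f x) (g x)).
Proof. by move=> Hf Hg; rewrite /cdrop; computable_auto. Qed.

#[local] Hint Extern 1 (computable _) => cbv beta; lazymatch goal with
  | |- computable (fun z => cdrop (@?a z) (@?b z)) => apply: (@computable_cdrop a b)
  end : computable.

Lemma computable_csize f : computable f -> computable (fun x => csize (f x)).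
Proof. by move=> Hf; rewrite /csize; computable_auto. Qed.

#[local] Hint Extern 1 (computable _) => cbv beta; lazymatch goal with
  | |- computable (fun z => csize (@?a z)) => apply: (@computable_csize a)
  end : computable.

Lemma computable_cnth f g :
  computable f -> computable g -> computable (fun x => cnth (f x) (g x)).
Proof. by move=> Hf Hg; rewrite /cnth; computable_auto. Qed.

#[local] Hint Extern 1 (computable _) => cbv beta; lazymatch goal with
  | |- computable (fun z => cnth (@?a z) (@?b z)) => apply: (@computable_cnth a b)
  end : computable.

Lemma computable_all_cseq (g : nat -> nat) (P : nat -> nat -> bool) :
  computable g -> computable (fun z => nat_of_bool (P (nfst z) (nsnd z))) ->
  computable (fun x => nat_of_bool (all (P x) (cseq (g x)))).
Proof.
move=> Hg HP.
apply: (@eq_computable (fun x => all (fun k => P x (cnth k (g x))) (iota 0 (csize (g x))))).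
  by move=> x; rewrite /cseq all_map.
apply: (computable_all (P := fun x k => P x (cnth k (g x)))); first by computable_auto.
by apply: (computable_uncurry (h := fun a b => nat_of_bool (P a b))) HP _ _; computable_auto.
Qed.

Definition cvalid nA y := all (fun k => (cdrop k y != 0) ==> (chead (cdrop k y) < nA)) (iota 0 y).
Definition cfix nA y := if cvalid nA y then y else 0.
Definition cfactor_at y d s := all (fun k => cnth (d + k) y == cnth k s) (iota 0 (csize s)).
Definition cbound nA n := iter n (fun b => (npair nA b).+1) 0.

Definition all_word_codes nA n (P : pred nat) :=
  all (fun y => cvalid nA y && (csize y == n) ==> P y) (iota 0 (cbound nA n).+1).
Definition has_word_code nA n (P : pred nat) :=
  has (fun y => [&& cvalid nA y, csize y == n & P y]) (iota 0 (cbound nA n).+1).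

Lemma computable_cfix nA f : computable f -> computable (fun x => cfix nA (f x)).
Proof. by move=> Hf; rewrite /cfix /cvalid; computable_auto. Qed.

Lemma computable_cfactor_at f g h : computable f -> computable g -> computable h ->
  computable (fun x => nat_of_bool (cfactor_at (f x) (g x) (h x))).
Proof. by move=> Hf Hg Hh; rewrite /cfactor_at; computable_auto. Qed.

Lemma computable_has_cseq (g : nat -> nat) (P : nat -> nat -> bool) :
  computable g -> computable (fun z => nat_of_bool (P (nfst z) (nsnd z))) ->
  computable (fun x => nat_of_bool (has (P x) (cseq (g x)))).
Proof.
move=> Hg HP.
apply: (@eq_computable (fun x => has (fun k => P x (cnth k (g x))) (iota 0 (csize (g x))))).
  by move=> x; rewrite /cseq has_map.
apply: (computable_has (P := fun x k => P x (cnth k (g x)))); first by computable_auto.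
by apply: (computable_uncurry (h := fun a b => nat_of_bool (P a b))) HP _ _; computable_auto.
Qed.

Lemma computable_all_word_codes nA (N : nat -> nat) (P : nat -> nat -> bool) :
  computable N -> computable (fun z => nat_of_bool (P (nfst z) (nsnd z))) ->
  computable (fun x => nat_of_bool (all_word_codes nA (N x) (P x))).
Proof.
move=> HN HP; rewrite /all_word_codes /cbound /cvalid.
apply: (computable_all (P := fun x y => _ ==> P x y)); first by computable_auto.
computable_auto.
Qed.

Lemma computable_has_word_code nA (N : nat -> nat) (P : nat -> nat -> bool) :
  computable N -> computable (fun z => nat_of_bool (P (nfst z) (nsnd z))) ->
  computable (fun x => nat_of_bool (has_word_code nA (N x) (P x))).
Proof.
move=> HN HP; rewrite /has_word_code /cbound /cvalid.
by apply: (computable_has (P := fun x y => [&& _, _ & P x y])); computable_auto.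
Qed.

Section WordCodes.

Variable A : finType.
Implicit Types (w u s : seq A).

Lemma code_word_inj : injective (@code_word A).
Proof.
move=> w u; rewrite !code_wordE; apply: code_seq_inj.
by move=> a b /ord_inj /enum_rank_inj.
Qed.

Lemma csize_code_word w : csize (code_word w) = size w.
Proof. by rewrite code_wordE csize_code_seq. Qed.

Lemma size_le_code_word w : size w <= code_word w.
Proof. by rewrite code_wordE size_le_code_seq. Qed.

Lemma cnth_code_word x0 k w : k < size w -> cnth k (code_word w) = enum_rank (nth x0 w k).
Proof.
move=> lt_kw; rewrite /cnth code_wordE cdrop_code_seq (drop_nth x0 lt_kw).
by rewrite chead_cons.
Qed.

Lemma cvalid_code_word w : cvalid #|A| (code_word w).
Proof.
apply/allP => k _; rewrite code_wordE cdrop_code_seq; apply/implyP.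
by case: (drop k w) => // a v _; rewrite chead_cons ltn_ord.
Qed.

Lemma ctail_lt y : 0 < y -> ctail y < y.
Proof.
move=> y_gt0; rewrite /ctail -[X in _ < X](prednK y_gt0) ltnS.
by rewrite -{2}(npair_nfst_nsnd y.-1); apply: leq_trans (leq_addl _ _) (leq_add_npair _ _).
Qed.

Lemma cvalid_codeP y : cvalid #|A| y -> exists w : seq A, code_word w = y.
Proof.
elim/ltn_ind: y => y IH valid_y.
case: (posnP y) => [->|y_gt0]; first by exists [::].
have head_lt : chead y < #|A|.
  by move/allP: valid_y => /(_ 0); rewrite mem_iota y_gt0 -lt0n y_gt0; apply.
have valid_tail : cvalid #|A| (ctail y).
  apply/allP => k; rewrite mem_iota add0n => lt_k.
  have := (allP valid_y) k.+1; rewrite mem_iota add0n (leq_ltn_trans lt_k (ctail_lt y_gt0)).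
  by rewrite /cdrop -iterSr; apply.
have [w Ew] := IH _ (ctail_lt y_gt0) valid_tail.
exists (enum_val (Ordinal head_lt) :: w) => /=.
by rewrite enum_valK Ew /chead /ctail npair_nfst_nsnd prednK.
Qed.

Lemma code_word_le_cbound w : code_word w <= cbound #|A| (size w).
Proof.
elim: w => // a w IH.
change ((npair (enum_rank a) (code_word w)).+1 <= (npair #|A| (cbound #|A| (size w))).+1).
rewrite !npairS.
by apply: leq_mul; [rewrite leq_pexp2l // ltnW | rewrite ltnS leq_double].
Qed.

Lemma cfactor_at_code u d s : d + size s <= size u ->
  cfactor_at (code_word u) d (code_word s) = (take (size s) (drop d u) == s).
Proof.
case: s => [|x0 s'] le_du; first by rewrite take0 /cfactor_at csize_code_word.
set s := x0 :: s' in le_du *; rewrite /cfactor_at csize_code_word.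
apply/allP/eqP => [Hs|Es k].
  apply: (@eq_from_nth _ x0); first by rewrite size_take size_drop; apply/minn_idPl; lia.
  move=> k; rewrite size_take size_drop => lt_k.
  have lt_ks : k < size s by move: lt_k; rewrite /minn; case: ifP; lia.
  have := Hs k; rewrite mem_iota lt_ks !(cnth_code_word x0) //; last by lia.
  by move=> /(_ isT) /eqP /ord_inj /enum_rank_inj; rewrite nth_take // nth_drop.
rewrite mem_iota add0n => lt_ks.
rewrite !(cnth_code_word x0) //; last by lia.
by rewrite -[in X in _ == X]Es nth_take // nth_drop.
Qed.

Lemma all_word_codesP n (P : pred nat) :
  reflect (forall w : seq A, size w = n -> P (code_word w)) (all_word_codes #|A| n P).
Proof.
apply: (iffP allP) => [H w sw|H y _].
  have := H (code_word w); rewrite mem_iota ltnS -sw code_word_le_cbound.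
  by rewrite cvalid_code_word csize_code_word eqxx; apply.
by apply/implyP => /andP [/cvalid_codeP [w <-]]; rewrite csize_code_word => /eqP; apply: H.
Qed.

Lemma has_word_codeP n (P : pred nat) :
  reflect (exists2 w : seq A, size w = n & P (code_word w)) (has_word_code #|A| n P).
Proof.
apply: (iffP hasP) => [[y _ /and3P [/cvalid_codeP [w <-]]]|[w <- Pw]].
  by rewrite csize_code_word => /eqP sw Pw; exists w.
exists (code_word w); first by rewrite mem_iota ltnS code_word_le_cbound.
by rewrite cvalid_code_word csize_code_word eqxx.
Qed.

End WordCodes.

Definition asbool (P : Prop) : bool := if excluded_middle_informative P then true else false.

Lemma asboolP (P : Prop) : reflect P (asbool P).
Proof. by rewrite /asbool; case: excluded_middle_informative => h; constructor. Qed.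

Definition inL_code (A : finType) (Om : (int -> A) -> Prop) (y : nat) : bool :=
  asbool (exists2 u : seq A, code_word u = y & inL Om u).

Lemma inL_codeP (A : finType) (Om : (int -> A) -> Prop) (u : seq A) :
  reflect (inL Om u) (inL_code Om (code_word u)).
Proof.
apply: (iffP (asboolP _)) => [[u' /code_word_inj -> //]|Lu].
by exists u.
Qed.

Lemma size_gt0_inL (A : finType) (Om : (int -> A) -> Prop) (u : seq A) : inL Om u -> 0 < size u.
Proof. by move=> [m [m_gt0 [-> _]]]. Qed.

(* The decider is only specified on codes of words, so invalid inputs are first replaced by
   [0], the code of the empty word. *)
Lemma computable_inL_code (A : finType) (Om : (int -> A) -> Prop) f :
  recursive_language Om -> computable f -> computable (fun x => inL_code Om (f x)).
Proof.
move=> [c decide_c] Hf.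
have [cfix_c Hfix] := computable_cfix #|A| Hf.
exists (rComp c cfix_c) => x; apply: ev_comp (Hfix x) _.
rewrite /cfix; case: ifP => [/cvalid_codeP [u <-]|not_valid].
  by have [Lu|nLu] := inL_codeP Om u; [apply: (decide_c u).1 | apply: (decide_c u).2].
have -> : inL_code Om (f x) = false.
  by apply/negbTE/(asboolP _) => -[u Eu _]; rewrite -Eu cvalid_code_word in not_valid.
by apply: (decide_c [::]).2 => /size_gt0_inL.
Qed.

#[local] Hint Extern 1 (computable _) => cbv beta; lazymatch goal with
  | |- computable (fun z => nat_of_bool (cfactor_at (@?a z) (@?b z) (@?c z))) =>
      apply: (@computable_cfactor_at a b c)
  | |- computable (fun z => nat_of_bool (all (@?P z) (cseq (@?g z)))) =>
      apply: (@computable_all_cseq g P)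
  | |- computable (fun z => nat_of_bool (has (@?P z) (cseq (@?g z)))) =>
      apply: (@computable_has_cseq g P)
  | |- computable (fun z => nat_of_bool (all_word_codes ?nA (@?N z) (@?P z))) =>
      apply: (@computable_all_word_codes nA N P)
  | |- computable (fun z => nat_of_bool (has_word_code ?nA (@?N z) (@?P z))) =>
      apply: (@computable_has_word_code nA N P)
  | |- computable (fun z => nat_of_bool (inL_code ?Om (@?a z))) =>
      apply: (@computable_inL_code _ Om a); first assumption
  end : computable.

(** * Windows of points *)

Definition restrict (A : Type) (om : int -> A) (lo : int) (n : nat) : seq A :=
  [seq om (lo + k%:Z)%R | k <- iota 0 n].

Lemma size_restrict (A : Type) (om : int -> A) lo n : size (restrict om lo n) = n.
Proof. by rewrite size_map size_iota. Qed.

Lemma occurs_at_restrict (A : finType) (s : seq A) (om : int -> A) (lo : int) (d n : nat) :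
  d + size s <= n ->
  occurs_at s om (lo + d%:Z)%R <-> take (size s) (drop d (restrict om lo n)) = s.
Proof.
move=> le_dn; rewrite /restrict /occurs_at -map_drop -map_take drop_iota take_iota.
have -> : minn (size s) (n - d) = size s by apply/minn_idPl; lia.
have -> : iota d (size s) = map (addn d) (iota 0 (size s)) by rewrite -iotaDl addn0.
rewrite -map_comp.
suff -> : [seq om (lo + d%:Z + k%:Z)%R | k <- iota 0 (size s)] =
          [seq ((fun k => om (lo + k%:Z)%R) \o addn d) k | k <- iota 0 (size s)] by [].
by apply: eq_map => k /=; rewrite PoszD addrA.
Qed.

(* The window on [-M, M) is a word of length [M + M], in which position [-k] sits at offset
   [window_pos M (code_int k)]. *)
Definition window_pos (M c : nat) : nat := if odd c then (M + c./2).+1 else M - c./2.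

Lemma window_pos_code (M : nat) (k : int) :
  code_int k <= M -> ((window_pos M (code_int k))%:Z = M%:Z - k)%R.
Proof.
by case: k => n; rewrite /window_pos /= odd_double /= ?doubleK ?uphalf_double -!muln2 ?NegzE; lia.
Qed.

Lemma window_pos_bounds (M n : nat) (k : int) : code_int k + n <= M ->
  n <= window_pos M (code_int k) /\ window_pos M (code_int k) + n <= M + M.
Proof.
by case: k => m; rewrite /window_pos /= odd_double /= ?doubleK ?uphalf_double -!muln2; lia.
Qed.

Lemma code_int_inj : injective code_int.
Proof. by move=> [m|m] [n|n] /= /eqP; rewrite -!muln2 => /eqP E; congr _; lia. Qed.

Lemma code_wi_inj (A : finType) : injective (@code_wi A).
Proof.
move=> [s k] [t j] /npair_inj /= [/code_word_inj -> /code_int_inj ->] //.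
Qed.

Lemma computable_decides (g : nat -> bool) : computable (fun x => nat_of_bool (g x)) ->
  exists c, forall x (P : Prop), reflect P (g x) -> decides_at c x P.
Proof.
move=> [c Hc]; exists c => x P gP; split=> [/gP gx | /gP not_gx]; first by have := Hc x; rewrite gx.
by have := Hc x; move/negbTE: not_gx => ->.
Qed.

Lemma code_wivj_bounds (A : finType) (w v : seq A) (i j : int) :
  code_int i + size w <= code_wivj w i v j /\ code_int j + size v <= code_wivj w i v j.
Proof.
rewrite /code_wivj.
have := leq_add_npair (code_word w) (npair (code_int i) (npair (code_word v) (code_int j))).
have := leq_add_npair (code_int i) (npair (code_word v) (code_int j)).
have := leq_add_npair (code_word v) (code_int j).
have := size_le_code_word w; have := size_le_code_word v.
by move=> *; split; lia.
Qed.

Lemma code_wivjE (A : finType) (w v : seq A) (i j : int) :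
  ((nfst (code_wivj w i v j) = code_word w) * (nfst (nsnd (code_wivj w i v j)) = code_int i) *
   (nfst (nsnd (nsnd (code_wivj w i v j))) = code_word v) *
   (nsnd (nsnd (nsnd (code_wivj w i v j))) = code_int j))%type.
Proof. by rewrite /code_wivj !(nfst_npair, nsnd_npair). Qed.

Lemma code_list_bound (A : finType) (l : seq (seq A * int)) p :
  p \in l -> code_int p.2 + size p.1 <= code_list l.
Proof.
move=> lp; rewrite code_listE; apply: leq_trans (ltnW (leq_code_seq _ lp)).
by rewrite addnC; apply: leq_trans (leq_add_npair _ _); rewrite leq_add2r size_le_code_word.
Qed.

Definition in_window (M ck a cs y : nat) : bool := cfactor_at y (window_pos M ck - a) cs.

Lemma in_windowP (A : finType) (om : int -> A) (s : seq A) (k : int) (M a : nat) :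
  code_int k + size s + a <= M ->
  reflect (occurs_at s om (- k - a%:Z)%R)
          (in_window M (code_int k) a (code_word s) (code_word (restrict om (- M%:Z)%R (M + M)))).
Proof.
move=> bound_k.
have [le_a_pos le_pos_MM] := @window_pos_bounds M (size s + a) k ltac:(lia).
have pos_k := @window_pos_code M k ltac:(lia).
rewrite /in_window cfactor_at_code ?size_restrict; last by lia.
have -> : (- k - a%:Z = - M%:Z + (window_pos M (code_int k) - a)%N%:Z)%R by lia.
by apply: (equivP eqP); apply: iff_sym; apply: occurs_at_restrict; lia.
Qed.

Lemma computable_in_window M ck a cs y :
  computable M -> computable ck -> computable a -> computable cs -> computable y ->
  computable (fun x => nat_of_bool (in_window (M x) (ck x) (a x) (cs x) (y x))).
Proof. by move=> *; rewrite /in_window /window_pos; computable_auto. Qed.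

#[local] Hint Extern 1 (computable _) => cbv beta; lazymatch goal with
  | |- computable (fun z => nat_of_bool (in_window (@?M z) (@?c z) (@?a z) (@?s z) (@?y z))) =>
      apply: (@computable_in_window M c a s y)
  end : computable.

(** * Deciding properties of cylinders *)

Section Subshift.

Variables (A : finType) (Om : (int -> A) -> Prop).
Hypothesis Om_shift : shift_invariant Om.
Hypothesis Om_rec : recursive_language Om.

Lemma shiftn_closed (k : int) (om : int -> A) : Om om -> Om (shiftn k om).
Proof.
have shiftn1 n (eta : int -> A) : shiftn 1 (shiftn n eta) = shiftn (n + 1)%R eta.
  by apply: functional_extensionality => m; rewrite /shiftn addrAC addrA.
have shiftn0 : shiftn 0 om = om by apply: functional_extensionality => m; rewrite /shiftn addr0.
have shiftn_nat (n : nat) : Om om -> Om (shiftn n%:Z%R om).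
  elim: n => [|n IH] Hom; first by rewrite shiftn0.
  by rewrite -addn1 PoszD -shiftn1 Om_shift; apply: IH.
case: k => n; first exact: shiftn_nat.
elim: n => [|n IH] Hom; apply/Om_shift; rewrite shiftn1.
  by have -> : (Negz 0 + 1 = 0%:Z)%R by []; rewrite shiftn0.
have -> : (Negz n.+1 + 1)%R = Negz n by rewrite !NegzE; lia.
exact: IH.
Qed.

Lemma inL_restrict om lo n : Om om -> 0 < n -> inL Om (restrict om lo n).
Proof.
move=> Hom n_gt0; exists n; split=> //; split; first exact: size_restrict.
by exists om; split=> //; exists lo; rewrite /occurs_at size_restrict.
Qed.

Lemma inL_realize u lo : inL Om u -> exists2 om, Om om & restrict om lo (size u) = u.
Proof.
move=> [m [_ [_ [om [Hom [p Eu]]]]]].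
exists (shiftn (p - lo)%R om); first exact: shiftn_closed.
by rewrite -[in RHS]Eu /restrict /occurs_at; apply: eq_map => k; rewrite /shiftn; congr om; lia.
Qed.

Definition all_Lwords n (Q : pred nat) := all_word_codes #|A| n (fun y => inL_code Om y ==> Q y).
Definition has_Lword n (Q : pred nat) := has_word_code #|A| n (fun y => inL_code Om y && Q y).

Lemma all_LwordsP lo n (Q : pred nat) : 0 < n ->
  reflect (forall om, Om om -> Q (code_word (restrict om lo n))) (all_Lwords n Q).
Proof.
move=> n_gt0; apply: (iffP (all_word_codesP _ _ _)) => [H om Hom|H u size_u].
  by move/implyP: (H _ (size_restrict om lo n)); apply; apply/inL_codeP/inL_restrict.
apply/implyP => /inL_codeP /(inL_realize lo) [om Hom Eu].
by have := H om Hom; rewrite -size_u Eu.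
Qed.

Lemma has_LwordP lo n (Q : pred nat) : 0 < n ->
  reflect (exists2 om, Om om & Q (code_word (restrict om lo n))) (has_Lword n Q).
Proof.
move=> n_gt0.
apply: (iffP (has_word_codeP _ _ _)) => [[u size_u /andP [/inL_codeP Lu Qu]]|[om Hom Qom]].
  by have [om Hom Eu] := inL_realize lo Lu; exists om; rewrite // -size_u Eu.
exists (restrict om lo n); first exact: size_restrict.
by rewrite Qom andbT; apply/inL_codeP/inL_restrict.
Qed.

Lemma computable_all_Lwords (N : nat -> nat) (Q : nat -> nat -> bool) :
  computable N -> computable (fun z => nat_of_bool (Q (nfst z) (nsnd z))) ->
  computable (fun x => nat_of_bool (all_Lwords (N x) (Q x))).
Proof. by move=> *; rewrite /all_Lwords; computable_auto. Qed.

Lemma computable_has_Lword (N : nat -> nat) (Q : nat -> nat -> bool) :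
  computable N -> computable (fun z => nat_of_bool (Q (nfst z) (nsnd z))) ->
  computable (fun x => nat_of_bool (has_Lword (N x) (Q x))).
Proof. by move=> *; rewrite /has_Lword; computable_auto. Qed.

#[local] Hint Extern 1 (computable _) => cbv beta; lazymatch goal with
  | |- computable (fun z => nat_of_bool (all_Lwords (@?N z) (@?Q z))) =>
      apply: (@computable_all_Lwords N Q)
  | |- computable (fun z => nat_of_bool (has_Lword (@?N z) (@?Q z))) =>
      apply: (@computable_has_Lword N Q)
  end : computable.

Lemma in_window0P om (s : seq A) (k : int) (M : nat) : code_int k + size s <= M ->
  reflect (occurs_at s om (- k)%R)
          (in_window M (code_int k) 0 (code_word s) (code_word (restrict om (- M%:Z)%R (M + M)))).
Proof.
by move=> bound_k; rewrite -[X in occurs_at _ _ X]subr0; apply: in_windowP; rewrite addn0.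
Qed.

Definition subset_test M ck1 cs1 ck2 cs2 :=
  all_Lwords (M + M) (fun y => in_window M ck1 0 cs1 y ==> in_window M ck2 0 cs2 y).

Lemma subset_testP M s1 k1 s2 k2 : 0 < M ->
  code_int k1 + size s1 <= M -> code_int k2 + size s2 <= M ->
  reflect (subsetP' (cyl Om s1 k1) (cyl Om s2 k2))
          (subset_test M (code_int k1) (code_word s1) (code_int k2) (code_word s2)).
Proof.
move=> M_gt0 bound1 bound2.
apply: (iffP (all_LwordsP (- M%:Z)%R _ _)) => [|H om [Hom o1]|H om Hom].
- by rewrite addn_gt0 M_gt0.
- split=> //; apply/(in_window0P _ bound2).
  by move/implyP: (H om Hom); apply; apply/in_window0P.
apply/implyP => /(in_window0P _ bound1) o1.
by have [_ o2] := H om (conj Hom o1); apply/in_window0P.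
Qed.
Definition meet_test M ck1 a1 cs1 ck2 a2 cs2 :=
  has_Lword (M + M) (fun y => in_window M ck1 a1 cs1 y && in_window M ck2 a2 cs2 y).

Lemma meet_testP M s1 k1 a1 s2 k2 a2 : 0 < M ->
  code_int k1 + size s1 + a1 <= M -> code_int k2 + size s2 + a2 <= M ->
  reflect (exists om, [/\ Om om, occurs_at s1 om (- k1 - a1%:Z)%R
                             & occurs_at s2 om (- k2 - a2%:Z)%R])
          (meet_test M (code_int k1) a1 (code_word s1) (code_int k2) a2 (code_word s2)).
Proof.
move=> M_gt0 bound1 bound2.
apply: (iffP (has_LwordP (- M%:Z)%R _ _)) => [|[om Hom /andP [o1 o2]]|[om [Hom o1 o2]]].
- by rewrite addn_gt0 M_gt0.
- by exists om; split=> //; [apply/(in_windowP _ bound1) | apply/(in_windowP _ bound2)].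
- exists om => //; apply/andP.
  by split; [apply/(in_windowP _ bound1) | apply/(in_windowP _ bound2)].
Qed.

Lemma occurs_at_shiftn (s : seq A) (a : int) (om : int -> A) (p : int) :
  occurs_at s (shiftn a om) p <-> occurs_at s om (p + a)%R.
Proof.
rewrite /occurs_at; suff -> : [seq shiftn a om (p + k%:Z)%R | k <- iota 0 (size s)] =
  [seq om (p + a + k%:Z)%R | k <- iota 0 (size s)] by [].
by apply: eq_map => k; rewrite /shiftn addrAC.
Qed.

Lemma Timg_cyl (s : seq A) (k a : int) om :
  Timg a (cyl Om s k) om <-> Om om /\ occurs_at s om (- k - a)%R.
Proof.
split=> [[eta [[Heta o] ->]]|[Hom o]].
  by split; [exact: shiftn_closed | rewrite occurs_at_shiftn subrK].
exists (shiftn (- a)%R om); split.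
  by split; [exact: shiftn_closed | rewrite occurs_at_shiftn].
by apply: functional_extensionality => m; rewrite /shiftn addrK.
Qed.

Lemma T3_cylP (s : seq A) (k : int) om :
  T3 (cyl Om s k) om <-> exists2 a : nat, a < 3 & Om om /\ occurs_at s om (- k - a%:Z)%R.
Proof.
rewrite /T3 !Timg_cyl; split=> [[[Hom o]|[|]]|[[|[|[|a]]] //= _ H]]; last 3 first.
- by left; move: H; rewrite subr0.
- by right; left.
- by right; right.
- by exists 0%N; rewrite ?subr0.
- by exists 1%N.
- by exists 2%N.
Qed.

Definition three_disjoint_test M ck1 cs1 ck2 cs2 :=
  all (fun a1 => all (fun a2 => ~~ meet_test M ck1 a1 cs1 ck2 a2 cs2) (iota 0 3)) (iota 0 3).

Lemma three_disjoint_testP M s1 k1 s2 k2 : 0 < M ->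
  code_int k1 + size s1 + 2 <= M -> code_int k2 + size s2 + 2 <= M ->
  reflect (three_disjoint (cyl Om s1 k1) (cyl Om s2 k2))
          (three_disjoint_test M (code_int k1) (code_word s1) (code_int k2) (code_word s2)).
Proof.
move=> M_gt0 bound1 bound2.
apply: (iffP allP) => [H om [/T3_cylP [a1 lt1 [Hom o1]] /T3_cylP [a2 lt2 [_ o2]]]|H a1].
  have /allP /(_ a2) := H a1 ltac:(by rewrite mem_iota).
  rewrite mem_iota => /(_ lt2) /negP; apply; apply/meet_testP; try lia.
  by exists om.
rewrite mem_iota => lt1; apply/allP => a2; rewrite mem_iota => lt2.
apply/negP => /meet_testP [|||om [Hom o1 o2]]; try lia.
by apply: (H om); split; apply/T3_cylP; [exists a1 | exists a2].
Qed.

Lemma cseq_code_list (l : seq (seq A * int)) : cseq (code_list l) = map (@code_wi A) l.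
Proof. by rewrite code_listE cseq_code_seq. Qed.

Definition cover_test M ck cs x :=
  all_Lwords (M + M) (fun y =>
    in_window M ck 0 cs y ==> has (fun e => in_window M (nsnd e) 0 (nfst e) y) (cseq x)).

Lemma cover_testP M s k (l : seq (seq A * int)) : 0 < M -> code_int k + size s <= M ->
  (forall p, p \in l -> code_int p.2 + size p.1 <= M) ->
  reflect (forall om, cyl Om s k om -> exists2 p, p \in l & cyl Om p.1 p.2 om)
          (cover_test M (code_int k) (code_word s) (code_list l)).
Proof.
move=> M_gt0 bound_k bound_l; rewrite /cover_test cseq_code_list.
apply: (iffP (all_LwordsP (- M%:Z)%R _ _)) => [|H om [Hom o]|H om Hom].
- by rewrite addn_gt0 M_gt0.
- move/implyP: (H om Hom) => /(_ (introT (in_window0P _ bound_k) o)) /hasP [_ /mapP [p lp ->]].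
  by rewrite nfst_npair nsnd_npair => /(in_window0P _ (bound_l p lp)) o'; exists p.
apply/implyP => /(in_window0P _ bound_k) o; have [p lp [_ o']] := H om (conj Hom o).
apply/hasP; exists (code_wi p); first exact: map_f.
by rewrite nfst_npair nsnd_npair; apply/(in_window0P _ (bound_l p lp)).
Qed.

Definition pairwise_disjoint_test M x :=
  all (fun e1 => all (fun e2 => (e1 != e2) ==>
         ~~ meet_test M (nsnd e1) 0 (nfst e1) (nsnd e2) 0 (nfst e2)) (cseq x)) (cseq x).

Lemma pairwise_disjoint_testP M (l : seq (seq A * int)) : 0 < M ->
  (forall p, p \in l -> code_int p.2 + size p.1 <= M) ->
  reflect (forall p q, p \in l -> q \in l -> p != q ->
             forall om, ~ (cyl Om p.1 p.2 om /\ cyl Om q.1 q.2 om))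
          (pairwise_disjoint_test M (code_list l)).
Proof.
move=> M_gt0 bound_l.
have bound0 p : p \in l -> code_int p.2 + size p.1 + 0 <= M by rewrite addn0; apply: bound_l.
rewrite /pairwise_disjoint_test cseq_code_list.
apply: (iffP allP) => [H p q lp lq ne om [[Hom op] [_ oq]]|H _ /mapP [p lp ->]].
  have /allP /(_ _ (map_f _ lq)) := H _ (map_f _ lp).
  rewrite (inj_eq (@code_wi_inj A)) ne /= !nfst_npair !nsnd_npair => /negP; apply.
  by apply/(meet_testP M_gt0 (bound0 p lp) (bound0 q lq)); exists om; rewrite !subr0.
apply/allP => _ /mapP [q lq ->]; rewrite (inj_eq (@code_wi_inj A)) !nfst_npair !nsnd_npair.
apply/implyP => ne; apply/negP => /(meet_testP M_gt0 (bound0 p lp) (bound0 q lq)) [om].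
by rewrite !subr0 => -[Hom op oq]; apply: (H p q lp lq ne om).
Qed.

Definition partition_test M ck cs x := [&&
  all (fun e => inL_code Om (nfst e)) (cseq x),
  pairwise_disjoint_test M x,
  all (fun e => subset_test M (nsnd e) (nfst e) ck cs) (cseq x) &
  cover_test M ck cs x].

Lemma partition_testP M w i (l : seq (seq A * int)) : 0 < M -> code_int i + size w <= M ->
  (forall p, p \in l -> code_int p.2 + size p.1 <= M) ->
  reflect (cylinder_partition Om w i l) (partition_test M (code_int i) (code_word w) (code_list l)).
Proof.
move=> M_gt0 bound_w bound_l.
have disjoint := pairwise_disjoint_testP M_gt0 bound_l.
have cover := cover_testP M_gt0 bound_w bound_l.
have allP_l (P : nat -> bool) (Q : seq A * int -> Prop) :
    (forall p, p \in l -> reflect (Q p) (P (code_wi p))) ->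
    reflect (forall p, p \in l -> Q p) (all P (cseq (code_list l))).
  move=> PQ; rewrite cseq_code_list all_map.
  by apply: (iffP allP) => H p lp; apply/(PQ p lp)/H.
have inLs : reflect (forall p, p \in l -> inL Om p.1)
                    (all (fun e => inL_code Om (nfst e)) (cseq (code_list l))).
  by apply: allP_l => p _; rewrite nfst_npair; apply: inL_codeP.
have subsets : reflect (forall p, p \in l -> subsetP' (cyl Om p.1 p.2) (cyl Om w i))
    (all (fun e => subset_test M (nsnd e) (nfst e) (code_int i) (code_word w))
         (cseq (code_list l))).
  apply: allP_l => p lp; rewrite nfst_npair nsnd_npair.
  exact: subset_testP (bound_l p lp) bound_w.
apply: (iffP and4P) => [[/inLs Ls /disjoint D /subsets S /cover C]|[Ls [D Cov]]].
  split=> //; split=> // om; split; first exact: C.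
  by move=> [p lp /(S p lp)].
split; [exact/inLs | exact/disjoint | apply/subsets | apply/cover] => //.
  by move=> p lp om op; apply/Cov; exists p.
by move=> om /Cov.
Qed.

Lemma subset_decidable : exists c, forall (w v : seq A) (i j : int), inL Om w -> inL Om v ->
  decides_at c (code_wivj w i v j) (subsetP' (cyl Om v j) (cyl Om w i)).
Proof.
pose dec x := subset_test x (nsnd (nsnd (nsnd x))) (nfst (nsnd (nsnd x))) (nfst (nsnd x)) (nfst x).
have [|c decide_c] := @computable_decides dec.
  by rewrite /dec /subset_test; computable_auto.
exists c => w v i j Lw Lv; apply: decide_c.
have [bound_w bound_v] := @code_wivj_bounds A w v i j.
rewrite /dec !code_wivjE; apply: (subset_testP _ bound_v bound_w).
by have := size_gt0_inL Lw; lia.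
Qed.

Lemma three_disjoint_decidable : exists c, forall (w v : seq A) (i j : int),
  inL Om w -> inL Om v ->
  decides_at c (code_wivj w i v j) (three_disjoint (cyl Om w i) (cyl Om v j)).
Proof.
pose dec x := three_disjoint_test (x + 2) (nfst (nsnd x)) (nfst x)
                                  (nsnd (nsnd (nsnd x))) (nfst (nsnd (nsnd x))).
have [|c decide_c] := @computable_decides dec.
  by rewrite /dec /three_disjoint_test /meet_test; computable_auto.
exists c => w v i j Lw Lv; apply: decide_c.
have [bound_w bound_v] := @code_wivj_bounds A w v i j.
by rewrite /dec !code_wivjE; apply: three_disjoint_testP; lia.
Qed.

Lemma partition_decidable (w : seq A) (i : int) : inL Om w ->
  exists c, forall l, decides_at c (code_list l) (cylinder_partition Om w i l).
Proof.
move=> Lw; pose dec x := partition_test (x + code_word w + code_int i) (code_int i) (code_word w) x.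
have [|c decide_c] := @computable_decides dec.
  rewrite /dec /partition_test /pairwise_disjoint_test /cover_test /subset_test /meet_test.
  by computable_auto.
have := size_gt0_inL Lw; have := size_le_code_word w => w_le w_gt0.
by exists c => l; apply: decide_c; apply: partition_testP => [||p /code_list_bound]; lia.
Qed.

End Subshift.

Theorem proposition3p4 (A : finType) (Om : (int -> A) -> Prop) :
  minimal_subshift Om ->
  (forall w : seq A, inLm Om 5 w -> uniq w) ->
  recursive_language Om ->
  (exists c : rf, forall (w v : seq A) (i j : int), inL Om w -> inL Om v ->
      decides_at c (code_wivj w i v j) (subsetP' (cyl Om v j) (cyl Om w i)))
  /\
  (exists c : rf, forall (w v : seq A) (i j : int), inL Om w -> inL Om v ->
      decides_at c (code_wivj w i v j) (three_disjoint (cyl Om w i) (cyl Om v j)))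
  /\
  (forall (w : seq A) (i : int), inL Om w ->
      exists c : rf, forall l : seq (seq A * int),
        decides_at c (code_list l) (cylinder_partition Om w i l)).
Proof.
move=> [_ [_ [Om_shift _]]] _ Om_rec; split; last split.
- exact: subset_decidable.
- exact: three_disjoint_decidable.
- exact: partition_decidable.
Qed.
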